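(* Let $a,b,c$ be three points on a circle of radius $1$ with center $o$ in the plane, such that $o$ lies in the (closed) triangle $\triangle abc$. Then the perimeter of $\triangle abc$ is at least $4$. *)

From Stdlib Require Import Reals.
Open Scope R_scope.

Definition point : Type := (R * R)%type.

Definition dist2 (p q : point) : R :=
  sqrt ((fst p - fst q) ^ 2 + (snd p - snd q) ^ 2).

Definition in_closed_triangle (p a b c : point) : Prop :=
  exists l1 l2 l3 : R,
    0 <= l1 /\ 0 <= l2 /\ 0 <= l3 /\ l1 + l2 + l3 = 1 /\
    fst p = l1 * fst a + l2 * fst b + l3 * fst c /\
    snd p = l1 * snd a + l2 * snd b + l3 * snd c.

Definition perimeter (a b c : point) : R :=
  dist2 a b + dist2 b c + dist2 c a.

From Stdlib Require Import Reals Lra Psatz.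
Open Scope R_scope.

(* Put [o] at the origin, so that [a], [b], [c] become unit vectors [u], [v],
   [w] with [0] in their convex hull.  For unit vectors [|u - v| = sqrt (2 - 2 u.v)
   >= 1 - u.v], because [sqrt d >= d / 2] on [[0, 4]].  Hence the perimeter is at
   least [3 - (u.v + v.w + w.u)], and it remains to show [u.v + v.w + w.u <= -1].
   If [l1 u + l2 v + l3 w = 0] with [l3 > 0], then [l3 <= l1 + l2] by the triangle
   inequality, and taking the inner product of the relation with [u + v] gives
   [l3 (u.v + v.w + w.u + 1) = (1 + u.v) (l3 - l1 - l2) <= 0]. *)

Definition dot (u v : point) : R := fst u * fst v + snd u * snd v.

Definition vsub (p q : point) : point := (fst p - fst q, snd p - snd q).

Lemma vsub_diag (p : point) : vsub p p = (0, 0).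
Proof. unfold vsub; f_equal; ring. Qed.

Lemma dist2_vsub (o p q : point) : dist2 (vsub p o) (vsub q o) = dist2 p q.
Proof. unfold dist2, vsub; cbn [fst snd]; f_equal; ring. Qed.

Lemma dot_vsub_self (o a : point) : dot (vsub a o) (vsub a o) = dist2 o a ^ 2.
Proof.
  unfold dist2, dot, vsub; cbn [fst snd].
  rewrite pow2_sqrt by (apply Rplus_le_le_0_compat; apply pow2_ge_0).
  ring.
Qed.

Lemma in_closed_triangle_vsub (o p a b c : point) :
  in_closed_triangle p a b c ->
  in_closed_triangle (vsub p o) (vsub a o) (vsub b o) (vsub c o).
Proof.
  intros (l1 & l2 & l3 & H1 & H2 & H3 & Hsum & Hx & Hy).
  exists l1, l2, l3; unfold vsub; simpl.
  repeat split; trivial; [rewrite Hx | rewrite Hy];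
    replace l1 with (1 - l2 - l3) by lra; ring.
Qed.

Lemma dot_unit_bounds (u v : point) :
  dot u u = 1 -> dot v v = 1 -> -1 <= dot u v <= 1.
Proof.
  unfold dot; intros Hu Hv.
  pose proof (pow2_ge_0 (fst u + fst v)); pose proof (pow2_ge_0 (snd u + snd v)).
  pose proof (pow2_ge_0 (fst u - fst v)); pose proof (pow2_ge_0 (snd u - snd v)).
  split; nra.
Qed.

Lemma sqrt_ge_half (d : R) : 0 <= d -> d <= 4 -> d / 2 <= sqrt d.
Proof.
  intros Hd0 Hd4.
  assert (Hle2 : sqrt d <= 2).
  { rewrite <- (sqrt_square 2) by lra. apply sqrt_le_1_alt. lra. }
  pose proof (sqrt_sqrt d Hd0).
  pose proof (sqrt_pos d).
  nra.
Qed.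

Lemma chord_ge_1_sub_dot (u v : point) :
  dot u u = 1 -> dot v v = 1 -> 1 - dot u v <= dist2 u v.
Proof.
  intros Hu Hv.
  pose proof (dot_unit_bounds u v Hu Hv).
  assert (Hchord : dist2 u v = sqrt (2 - 2 * dot u v)).
  { unfold dist2; f_equal. unfold dot in *. nra. }
  rewrite Hchord.
  replace (1 - dot u v) with ((2 - 2 * dot u v) / 2) by field.
  apply sqrt_ge_half; lra.
Qed.

Lemma weight_le_sum_weights (u v w : point) (l1 l2 l3 : R) :
  dot u u = 1 -> dot v v = 1 -> dot w w = 1 ->
  0 <= l1 -> 0 <= l2 -> 0 <= l3 ->
  l1 * fst u + l2 * fst v + l3 * fst w = 0 ->
  l1 * snd u + l2 * snd v + l3 * snd w = 0 ->
  l3 <= l1 + l2.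
Proof.
  intros Hu Hv Hw H1 H2 H3 Ex Ey.
  pose proof (dot_unit_bounds u v Hu Hv).
  assert (Hsq : l3 ^ 2 = l1 ^ 2 + l2 ^ 2 + 2 * l1 * l2 * dot u v).
  { transitivity ((l3 * fst w) ^ 2 + (l3 * snd w) ^ 2).
    { transitivity (l3 ^ 2 * dot w w); [rewrite Hw; ring | unfold dot; ring]. }
    replace (l3 * fst w) with (- (l1 * fst u + l2 * fst v)) by lra.
    replace (l3 * snd w) with (- (l1 * snd u + l2 * snd v)) by lra.
    transitivity (l1 ^ 2 * dot u u + l2 ^ 2 * dot v v + 2 * l1 * l2 * dot u v);
      [unfold dot; ring | rewrite Hu, Hv; ring]. }
  assert (0 <= l1 * l2 * (1 - dot u v)) by (apply Rmult_le_pos; [apply Rmult_le_pos |]; lra).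
  assert (l3 ^ 2 <= (l1 + l2) ^ 2) by lra.
  nra.
Qed.

Lemma dot_sum_le_neg1_of_pos_weight (u v w : point) (l1 l2 l3 : R) :
  dot u u = 1 -> dot v v = 1 -> dot w w = 1 ->
  0 <= l1 -> 0 <= l2 -> 0 < l3 ->
  l1 * fst u + l2 * fst v + l3 * fst w = 0 ->
  l1 * snd u + l2 * snd v + l3 * snd w = 0 ->
  dot u v + dot v w + dot w u <= -1.
Proof.
  intros Hu Hv Hw H1 H2 H3 Ex Ey.
  pose proof (dot_unit_bounds u v Hu Hv).
  pose proof (weight_le_sum_weights u v w l1 l2 l3 Hu Hv Hw H1 H2 (Rlt_le _ _ H3) Ex Ey).
  assert (Hid : l3 * (dot u v + dot v w + dot w u + 1)
                = (1 + dot u v) * (l3 - l1 - l2)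
                  + (fst u + fst v) * (l1 * fst u + l2 * fst v + l3 * fst w)
                  + (snd u + snd v) * (l1 * snd u + l2 * snd v + l3 * snd w)
                  + l1 * (1 - dot u u) + l2 * (1 - dot v v))
    by (unfold dot; ring).
  rewrite Ex, Ey, Hu, Hv in Hid.
  nra.
Qed.

Lemma dot_sum_le_neg1 (u v w : point) :
  dot u u = 1 -> dot v v = 1 -> dot w w = 1 ->
  in_closed_triangle (0, 0) u v w ->
  dot u v + dot v w + dot w u <= -1.
Proof.
  intros Hu Hv Hw (l1 & l2 & l3 & H1 & H2 & H3 & Hsum & Ex & Ey); simpl in Ex, Ey.
  destruct (Rlt_or_le 0 l3) as [Hl3 | Hl3];
    [| destruct (Rlt_or_le 0 l2) as [Hl2 | Hl2]].
  - apply (dot_sum_le_neg1_of_pos_weight u v w l1 l2 l3); lra.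
  - enough (dot w u + dot u v + dot v w <= -1) by lra.
    apply (dot_sum_le_neg1_of_pos_weight w u v l3 l1 l2); lra.
  - enough (dot v w + dot w u + dot u v <= -1) by lra.
    apply (dot_sum_le_neg1_of_pos_weight v w u l2 l3 l1); lra.
Qed.

Theorem lemma1 (o a b c : point) :
  dist2 o a = 1 -> dist2 o b = 1 -> dist2 o c = 1 ->
  in_closed_triangle o a b c ->
  4 <= perimeter a b c.
Proof.
  intros Ha Hb Hc Hin.
  assert (Hu : dot (vsub a o) (vsub a o) = 1) by (rewrite dot_vsub_self, Ha; ring).
  assert (Hv : dot (vsub b o) (vsub b o) = 1) by (rewrite dot_vsub_self, Hb; ring).
  assert (Hw : dot (vsub c o) (vsub c o) = 1) by (rewrite dot_vsub_self, Hc; ring).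
  assert (Hsum := in_closed_triangle_vsub o _ _ _ _ Hin).
  rewrite vsub_diag in Hsum.
  apply (dot_sum_le_neg1 _ _ _ Hu Hv Hw) in Hsum.
  unfold perimeter; rewrite <- (dist2_vsub o a b), <- (dist2_vsub o b c), <- (dist2_vsub o c a).
  pose proof (chord_ge_1_sub_dot _ _ Hu Hv).
  pose proof (chord_ge_1_sub_dot _ _ Hv Hw).
  pose proof (chord_ge_1_sub_dot _ _ Hw Hu).
  lra.
Qed.
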